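(* Let $\epsilon<1$ be a constant. For any instance oracle $f$ with $\max\{|f(G,v)|: G \text{ an } n\text{-node graph}, v\in G\}=o(n\log n)$ and any deterministic exploration algorithm $A$, for infinitely many $n$ there exist an $n$-node hamiltonian graph $G$ and a starting node $v$ such that the agent executing $A$ with input $f(G,v)$ from $v$ makes at least $n+n^{\epsilon}$ edge traversals before it has visited all nodes and stopped (or fails to explore $G$).
   Context: Model: a graph is a simple connected undirected graph with $n$ nodes. Nodes are unlabeled; at each node of degree $d$ the incident edges carry distinct port numbers $0,\dots,d-1$, arbitrarily assigned. A mobile agent starts at some node. At each step, located at a node $u$ whose degree it knows, it chooses a port at $u$ and traverses the corresponding edge to a neighbor $w$; upon arrival it learns the port number of this edge at $w$ and the degree of $w$. The agent must visit all nodes and stop; the time of exploration is the number of edge traversals. A deterministic exploration algorithm receives as input a binary string (advice); its size is its length. An instance oracle is a function assigning a binary string $f(G,v)$ to each pair $(G,v)$ where $G$ is a port-numbered graph and $v$ is the starting node of the agent. A graph is hamiltonian if it has a cycle through all its nodes. Logarithms are to base 2. *)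

From Stdlib Require Import Reals List Arith Relations.
Import ListNotations.
Open Scope R_scope.

(* Node u has degree [deg u]; the edge with port p at u (p < deg u) leads to
   node [nbr u p], where this same edge has port [bport u p].
   Values outside the meaningful range are junk and are never read by the agent. *)
Record pgraph (n : nat) := {
  deg : nat -> nat;
  nbr : nat -> nat -> nat;
  bport : nat -> nat -> nat;
  pg_nbr_lt : forall u p, (u < n)%nat -> (p < deg u)%nat -> (nbr u p < n)%nat;
  pg_bport_lt : forall u p, (u < n)%nat -> (p < deg u)%nat ->
      (bport u p < deg (nbr u p))%nat;
  pg_back_nbr : forall u p, (u < n)%nat -> (p < deg u)%nat ->
      nbr (nbr u p) (bport u p) = u;
  pg_back_port : forall u p, (u < n)%nat -> (p < deg u)%nat ->
      bport (nbr u p) (bport u p) = p;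
  pg_noloop : forall u p, (u < n)%nat -> (p < deg u)%nat -> nbr u p <> u;
  pg_simple : forall u p q, (u < n)%nat -> (p < deg u)%nat -> (q < deg u)%nat ->
      nbr u p = nbr u q -> p = q;
  pg_connected : forall u w, (u < n)%nat -> (w < n)%nat ->
      clos_refl_trans nat
        (fun x y => (x < n)%nat /\ exists p, (p < deg x)%nat /\ nbr x p = y) u w
}.
Arguments deg {n}.
Arguments nbr {n}.
Arguments bport {n}.

Definition adj {n} (G : pgraph n) (u w : nat) : Prop :=
  (u < n)%nat /\ exists p, (p < deg G u)%nat /\ nbr G u p = w.

Definition hamiltonian {n} (G : pgraph n) : Prop :=
  (3 <= n)%nat /\
  exists l : list nat, length l = n /\ NoDup l /\ Forall (fun u => (u < n)%nat) l /\
    forall i, (i < n)%nat -> adj G (nth i l 0%nat) (nth ((i + 1) mod n) l 0%nat).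

Definition advice := list bool.
Definition oracle := forall n, pgraph n -> nat -> advice.

(* Deterministic exploration algorithm: given the advice, the degree of the
   starting node and the history of observations (port taken, port of arrival,
   degree of arrival node), it either stops or takes a port. *)
Inductive action := Stop | Go (p : nat).
Definition algorithm := advice -> nat -> list (nat * nat * nat) -> action.

(* State after k edge traversals: current node, history, visited nodes
   (None if the agent stopped earlier or chose a non-existent port). *)
Fixpoint run {n} (A : algorithm) (adv : advice) (G : pgraph n) (v : nat) (k : nat)
  : option (nat * list (nat * nat * nat) * list nat) :=
  match k with
  | O => Some (v, [], [v])
  | S k' =>
    match run A adv G v k' with
    | None => None
    | Some (u, h, vis) =>
      match A adv (deg G v) h with
      | Stop => None
      | Go p =>
        if Nat.ltb p (deg G u) then
          let w := nbr G u p in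
          Some (w, h ++ [(p, bport G u p, deg G w)], vis ++ [w])
        else None
      end
    end
  end.

Definition explores_in {n} (A : algorithm) (adv : advice) (G : pgraph n) (v : nat)
  (k : nat) : Prop :=
  exists u h vis, run A adv G v k = Some (u, h, vis) /\
    A adv (deg G v) h = Stop /\
    forall x, (x < n)%nat -> In x vis.

Definition advice_o_nlogn (f : oracle) : Prop :=
  forall c : R, 0 < c -> exists N : nat, forall n : nat, (N <= n)%nat ->
    forall (G : pgraph n) (v : nat), (v < n)%nat ->
      INR (length (f n G v)) <= c * INR n * (ln (INR n) / ln 2).

From Stdlib Require Import Reals List Arith Lia Lra Relations Classical.
Import ListNotations.
Open Scope nat_scope.

(** Fix [h = 2^t] and [m = h^2] with [t] large. For every labelling
    [phi : [0,h)^m] consider the graph made of a ring [0, ..., m-1] and a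
    clique of [2h - 2] nodes joined to every ring node; [phi_i] is hidden in
    the port number of the ring edge [{i, i+1}] (in [[0,h)] at even [i], in
    [[h,2h)] at odd [i], so that the two ring ports of a node differ), and the
    ring followed by the clique is a Hamiltonian cycle.

    If the agent explored every such graph in fewer than [n + n^eps] steps,
    then [phi] would be determined by the advice, the sequence of "codes" of
    the ports taken (forward on the ring, backward on the ring, or which
    clique edge) and the labels of the ring edges never traversed. Only the
    steps touching the clique carry informative codes, and the untraversed
    ring edges cut the ring into arcs which can only be entered from the
    clique; since the agent spends at most [k + 1 - m <= n/64 + O(h)] steps in
    the clique, these data take fewer than [h^m] values when the advice is
    [o(n log n)] bits long, contradicting injectivity. *)

Ltac decide_tests :=
  repeat match goal with
  | |- context [?a =? ?b] => destruct (Nat.eqb_spec a b); cbn beta iota in *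
  | |- context [?a <? ?b] => destruct (Nat.ltb_spec a b); cbn beta iota in *
  | _ : context [?a =? ?b] |- _ => destruct (Nat.eqb_spec a b); cbn beta iota in *
  | _ : context [?a <? ?b] |- _ => destruct (Nat.ltb_spec a b); cbn beta iota in *
  end.

Definition skip (e p : nat) := if p <? e then p else p - 1.
Definition unskip (e j : nat) := if j <? e then j else S j.

Lemma unskip_skip e p : p <> e -> unskip e (skip e p) = p.
Proof. unfold skip, unskip; decide_tests; lia. Qed.

Lemma skip_unskip e j : skip e (unskip e j) = j.
Proof. unfold skip, unskip; decide_tests; lia. Qed.

Lemma unskip_neq e j : unskip e j <> e.
Proof. unfold unskip; decide_tests; lia. Qed.

Lemma unskip_le e j : unskip e j <= S j.
Proof. unfold unskip; decide_tests; lia. Qed.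

Lemma skip_lt e p B : p < B -> e < B -> p <> e -> skip e p < B - 1.
Proof. unfold skip; decide_tests; lia. Qed.

Lemma unskip_lt e j B : j < B - 1 -> unskip e j < B.
Proof. unfold unskip; decide_tests; lia. Qed.

Lemma unskip_inj e i j : unskip e i = unskip e j -> i = j.
Proof. intro E; rewrite <- (skip_unskip e i), <- (skip_unskip e j); congruence. Qed.

Definition count (P : nat -> bool) (l : list nat) := length (filter P l).

Lemma count_mono (P Q : nat -> bool) l :
  (forall x, In x l -> P x = true -> Q x = true) -> count P l <= count Q l.
Proof.
  unfold count; induction l as [|a l IH]; simpl; auto; intro H.
  destruct (P a) eqn:Pa.
  - rewrite (H a (or_introl eq_refl) Pa); simpl; apply le_n_S, IH; auto.
  - destruct (Q a); simpl; [apply le_S|]; apply IH; auto.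
Qed.

Lemma count_orb (P Q : nat -> bool) l : count (fun x => orb (P x) (Q x)) l <= count P l + count Q l.
Proof. unfold count; induction l as [|a l IH]; simpl; auto; destruct (P a), (Q a); simpl; lia. Qed.

Lemma count_negb (P : nat -> bool) l : count P l + count (fun x => negb (P x)) l = length l.
Proof. unfold count; induction l as [|a l IH]; simpl; auto; destruct (P a); simpl; lia. Qed.

Lemma count_seq_S (P : nat -> bool) y :
  count P (seq 0 (S y)) = count P (seq 0 y) + (if P y then 1 else 0).
Proof. unfold count; rewrite seq_S, filter_app, length_app; simpl; destruct (P y); simpl; lia. Qed.

Lemma count_shift (P : nat -> bool) k : count (fun j => P (S j)) (seq 0 k) <= count P (seq 0 (S k)).
Proof.
  unfold count; change (seq 0 (S k)) with (0 :: seq 1 k); cbn [filter].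
  rewrite <- seq_shift, filter_map_swap; destruct (P 0); simpl; rewrite length_map; lia.
Qed.

Lemma map_filter_eq (f g : nat -> nat) (P : nat -> bool) l :
  map f (filter P l) = map g (filter P l) -> forall i, In i l -> P i = true -> f i = g i.
Proof.
  induction l as [|a l IH]; simpl; [tauto|]; intros H i Hi Hp.
  destruct (P a) eqn:Ea; simpl in H.
  - injection H as H1 H2; destruct Hi as [<-|Hi]; auto.
  - destruct Hi as [<-|Hi]; [congruence|auto].
Qed.

Lemma nth_map_seq (f : nat -> nat) k j d : j < k -> nth j (map f (seq 0 k)) d = f j.
Proof.
  intro Hj; rewrite (nth_indep _ d (f 0)) by (rewrite length_map, length_seq; lia).
  rewrite map_nth, seq_nth by lia; auto.
Qed.

Lemma NoDup_inj_length_le {X Y : Type} (g : X -> Y) (l : list X) (s : list Y) :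
  NoDup l -> (forall x y, In x l -> In y l -> g x = g y -> x = y) ->
  (forall x, In x l -> In (g x) s) -> length l <= length s.
Proof.
  intros Hl Hinj Hs; rewrite <- (length_map g); apply NoDup_incl_length.
  - apply NoDup_map_NoDup_ForallPairs; auto; intros x y Hx Hy; apply Hinj; auto.
  - intros y Hy; apply in_map_iff in Hy; destruct Hy as [x [<- Hx]]; auto.
Qed.

Lemma list_choice {X Y : Type} (dec : forall x y : X, {x = y} + {x <> y}) (y0 : Y)
  (Q : X -> Y -> Prop) (l : list X) :
  (forall x, In x l -> exists y, Q x y) -> exists g, forall x, In x l -> Q x (g x).
Proof.
  induction l as [|a l IH]; intro H; [exists (fun _ => y0); intros _ []|].
  destruct (H a (or_introl eq_refl)) as [ya Ha].
  destruct IH as [g Hg]; [intros x Hx; apply H; right; auto|].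
  exists (fun x => if dec x a then ya else g x); intros x Hx.
  destruct (dec x a) as [->|Hxa]; auto; destruct Hx as [<-|Hx]; [congruence|auto].
Qed.

Lemma existsb_ext_in (f g : nat -> bool) l :
  (forall x, In x l -> f x = g x) -> existsb f l = existsb g l.
Proof. induction l as [|a l IH]; simpl; auto; intro H; rewrite H, IH; auto. Qed.

Lemma flat_map_length_le {X Y : Type} (f : X -> list Y) l M :
  (forall x, In x l -> length (f x) <= M) -> length (flat_map f l) <= length l * M.
Proof.
  induction l as [|a l IH]; simpl; auto; intro H; rewrite length_app.
  pose proof (H a (or_introl eq_refl)); pose proof (IH (fun x Hx => H x (or_intror Hx))); lia.
Qed.

Fixpoint bit_lists (L : nat) : list (list bool) :=
  match L with
  | 0 => [[]]
  | S L' => [] :: map (cons true) (bit_lists L') ++ map (cons false) (bit_lists L')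
  end.

Lemma bit_lists_length L : length (bit_lists L) < 2 ^ S L.
Proof. induction L; simpl; auto; rewrite length_app, !length_map; simpl in IHL; lia. Qed.

Lemma bit_lists_complete L (a : list bool) : length a <= L -> In a (bit_lists L).
Proof.
  revert a; induction L; intros a Ha; destruct a as [|b a]; simpl in *; auto; try lia.
  right; apply in_or_app; destruct b; [left|right]; apply in_map, IHL; lia.
Qed.

Fixpoint bounded_lists (B U : nat) : list (list nat) :=
  match U with
  | 0 => [[]]
  | S U' => [] :: flat_map (fun x => map (cons x) (bounded_lists B U')) (seq 0 B)
  end.

Lemma bounded_lists_length B U : length (bounded_lists B U) <= S B ^ U.
Proof.
  induction U; simpl; auto.
  eapply Nat.le_trans; [apply le_n_S, (flat_map_length_le _ _ (S B ^ U))|].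
  - intros; rewrite length_map; apply IHU.
  - rewrite length_seq; pose proof (Nat.pow_nonzero (S B) U); nia.
Qed.

Lemma bounded_lists_complete B U l :
  length l <= U -> Forall (fun x => x < B) l -> In l (bounded_lists B U).
Proof.
  revert l; induction U; intros l Hl F; destruct l as [|x l]; simpl in *; auto; try lia.
  right; inversion F; subst; apply in_flat_map; exists x; split; [apply in_seq; lia|].
  apply in_map, IHU; auto; lia.
Qed.

Fixpoint code_lists (B len r : nat) : list (list nat) :=
  match len with
  | 0 => [[]]
  | S l =>
      map (cons 0) (code_lists B l r) ++ map (cons 1) (code_lists B l r) ++
      match r with
      | 0 => []
      | S r' => flat_map (fun x => map (cons (2 + x)) (code_lists B l r')) (seq 0 B)
      end
  end.

Lemma code_lists_length B len :
  1 <= B -> forall r, length (code_lists B len r) <= 2 ^ len * S len ^ r * B ^ r.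
Proof.
  intro HB; induction len as [|len IH]; intro r; simpl code_lists.
  - simpl; rewrite Nat.pow_1_l; pose proof (Nat.pow_nonzero B r); lia.
  - rewrite !length_app, !length_map; destruct r as [|r].
    + specialize (IH 0); simpl in *; lia.
    + eapply Nat.le_trans.
      { apply Nat.add_le_mono; [apply IH|apply Nat.add_le_mono; [apply IH|]].
        apply flat_map_length_le; intros; rewrite length_map; apply IH. }
      rewrite length_seq.
      assert (S len ^ r <= S (S len) ^ r) by (apply Nat.pow_le_mono_l; lia).
      rewrite !Nat.pow_succ_r'.
      set (X := 2 ^ len) in *; set (Y := S len ^ r) in *; set (Z := B ^ r) in *.
      set (Y' := S (S len) ^ r) in *.
      transitivity ((2 * len + 3) * (X * Y * (B * Z))); [apply Nat.eq_le_incl; ring|].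
      transitivity ((2 * len + 4) * (X * Y' * (B * Z))); [|apply Nat.eq_le_incl; ring].
      apply Nat.mul_le_mono; [lia|]; apply Nat.mul_le_mono; [apply Nat.mul_le_mono|]; lia.
Qed.

Definition count_ge2 := count (fun x => 2 <=? x).

Lemma count_ge2_cons x l : count_ge2 (x :: l) = (if 2 <=? x then 1 else 0) + count_ge2 l.
Proof. unfold count_ge2, count; simpl; destruct x as [|[|x]]; reflexivity. Qed.

Lemma code_lists_complete B len r l :
  length l = len -> Forall (fun x => x < 2 + B) l -> count_ge2 l <= r -> In l (code_lists B len r).
Proof.
  revert r l; induction len as [|len IH]; intros r l Hl F Hc; destruct l as [|x l];
    simpl in Hl; try lia; simpl; auto.
  inversion F; subst; rewrite count_ge2_cons in Hc; apply in_or_app.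
  destruct x as [|[|x]].
  - left; apply in_map, IH; auto.
  - right; apply in_or_app; left; apply in_map, IH; auto.
  - right; apply in_or_app; right; simpl in Hc; destruct r as [|r]; [lia|].
    apply in_flat_map; exists x; split; [apply in_seq; lia|]; apply in_map, IH; auto; lia.
Qed.

Definition code_lists_upto B K r := flat_map (fun len => code_lists B len r) (seq 0 (S K)).

Lemma code_lists_upto_length B K r :
  1 <= B -> length (code_lists_upto B K r) <= S K * (2 ^ K * S K ^ r * B ^ r).
Proof.
  intro HB; unfold code_lists_upto.
  eapply Nat.le_trans; [apply (flat_map_length_le _ _ (2 ^ K * S K ^ r * B ^ r))|].
  - intros len Hlen; apply in_seq in Hlen.
    eapply Nat.le_trans; [apply code_lists_length; auto|].
    apply Nat.mul_le_mono; [apply Nat.mul_le_mono|]; auto.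
    + apply Nat.pow_le_mono_r; lia.
    + apply Nat.pow_le_mono_l; lia.
  - rewrite length_seq; auto.
Qed.

Lemma code_lists_upto_complete B K r l :
  length l <= K -> Forall (fun x => x < 2 + B) l -> count_ge2 l <= r -> In l (code_lists_upto B K r).
Proof.
  intros; apply in_flat_map; exists (length l); split; [apply in_seq; lia|].
  apply code_lists_complete; auto.
Qed.

Fixpoint labellings (h m : nat) : list (list nat) :=
  match m with
  | 0 => [[]]
  | S m' => flat_map (fun x => map (cons x) (labellings h m')) (seq 0 h)
  end.

Lemma labellings_length h m : length (labellings h m) = h ^ m.
Proof.
  induction m as [|m IH]; simpl; auto; rewrite <- IH.
  generalize (labellings h m); intro l.
  assert (E : forall xs, length (flat_map (fun x => map (cons x) l) xs) = length xs * length l).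
  { induction xs; simpl; auto; rewrite length_app, length_map, IHxs; auto. }
  rewrite E, length_seq; auto.
Qed.

Lemma labellingsP h m l : In l (labellings h m) <-> length l = m /\ Forall (fun x => x < h) l.
Proof.
  revert l; induction m as [|m IH]; intro l; simpl.
  - split; [intros [<-|[]]; auto|intros [H _]; destruct l; simpl in *; auto; lia].
  - rewrite in_flat_map; split.
    + intros [x [Hx Hl]]; apply in_map_iff in Hl; destruct Hl as [l' [<- Hl']].
      apply IH in Hl'; apply in_seq in Hx; simpl; split; [lia|constructor; [lia|tauto]].
    + intros [Hl F]; destruct l as [|x l]; simpl in Hl; [lia|]; inversion F; subst.
      exists x; split; [apply in_seq; lia|]; apply in_map, IH; auto.
Qed.

Lemma labellings_NoDup h m : NoDup (labellings h m).
Proof.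
  induction m as [|m IH]; simpl; [repeat constructor; auto|].
  generalize (seq_NoDup h 0); generalize (seq 0 h); intro xs.
  induction xs as [|x xs IHxs]; intro Hn; simpl; [constructor|].
  inversion Hn; subst; apply NoDup_app.
  - apply NoDup_map_NoDup_ForallPairs; auto; intros a b _ _ E; injection E; auto.
  - apply IHxs; auto.
  - intros a Ha Hb; apply in_map_iff in Ha; destruct Ha as [l [<- _]].
    apply in_flat_map in Hb; destruct Hb as [y [Hy Hb]].
    apply in_map_iff in Hb; destruct Hb as [l' [E _]]; injection E; intros; subst; auto.
Qed.

Lemma encoding_count_lt t h M n K L R : h = 2 ^ t -> M = h * h -> 10 <= t -> n = M + (2 * h - 2) ->
  64 * K <= 65 * n -> 32 * L <= n * (2 * t + 1) -> R = S K - M ->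
  2 ^ S L * (S K * (2 ^ K * S K ^ (2 * R) * (2 * h) ^ (2 * R))) * S h ^ S R < h ^ M.
Proof.
  intros Hh HM Ht Hn HK HL HR.
  assert (1024 <= h) by (subst h; replace 1024 with (2 ^ 10) by reflexivity; apply Nat.pow_le_mono_r; lia).
  assert (1024 * h <= M) by (subst M; nia).
  assert (HSK : S K <= 2 ^ (2 * t + 2)).
  { assert (E4 : 2 ^ (2 * t + 2) = 4 * M).
    { subst M h; replace (2 * t + 2) with (t + t + 2) by lia; rewrite !Nat.pow_add_r; simpl; ring. }
    lia. }
  assert (Hh2 : 2 * h = 2 ^ S t) by (subst h; reflexivity).
  assert (HhM : h ^ M = 2 ^ (t * M)) by (subst h; rewrite Nat.pow_mul_r; reflexivity).
  rewrite HhM.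
  (* bound every factor by a power of 2 and compare exponents *)
  eapply Nat.le_lt_trans with (m := 2 ^ S L * (2 ^ (2 * t + 2) * (2 ^ K * (2 ^ (2 * t + 2)) ^ (2 * R)
      * (2 ^ S t) ^ (2 * R))) * (2 ^ S t) ^ S R).
  { apply Nat.mul_le_mono; [apply Nat.mul_le_mono; [lia|]|apply Nat.pow_le_mono_l; lia].
    apply Nat.mul_le_mono; [auto|]; apply Nat.mul_le_mono; [apply Nat.mul_le_mono; [lia|]|].
    - apply Nat.pow_le_mono_l; auto.
    - rewrite Hh2; lia. }
  rewrite <- !Nat.pow_mul_r, <- !Nat.pow_add_r; apply Nat.pow_lt_mono_r; [lia|].
  set (Z := t * R); set (X := t * M); set (Y := t * h).
  assert (E : S L + (2 * t + 2 + (K + (2 * t + 2) * (2 * R) + S t * (2 * R))) + S t * S R =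
              S L + 2 * t + 2 + K + 7 * Z + 7 * R + t + 1) by (unfold Z; ring).
  rewrite E.
  assert (448 * R <= 8 * M) by lia.
  assert (448 * Z <= 8 * X) by (unfold Z, X; nia).
  assert (1024 * Y <= X) by (unfold X, Y; nia).
  assert (10 * M <= X) by (unfold X; nia).
  assert (n * (2 * t + 1) = 2 * X + 4 * Y - 4 * t + n) by (unfold X, Y; subst n; nia).
  assert (t <= Y) by (unfold Y; nia).
  lia.
Qed.

Section Run.
Variables (n : nat) (G : pgraph n) (A : algorithm) (adv : advice) (v : nat).

Definition state j := run A adv G v j.
Definition pos j := match state j with Some (u, _, _) => u | None => v end.
Definition port j :=
  match state j with
  | Some (_, hist, _) => match A adv (deg G v) hist with Go p => p | Stop => 0 end
  | None => 0
  end.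

Lemma state_S j w hist' vis' : state (S j) = Some (w, hist', vis') ->
  exists u hist vis p, state j = Some (u, hist, vis) /\ A adv (deg G v) hist = Go p /\
    p < deg G u /\ w = nbr G u p /\ hist' = hist ++ [(p, bport G u p, deg G w)] /\
    vis' = vis ++ [w].
Proof.
  unfold state; simpl; destruct (run A adv G v j) as [[[u hist] vis]|]; [|discriminate].
  destruct (A adv (deg G v) hist) as [|p] eqn:Ep0; [discriminate|].
  destruct (p <? deg G u) eqn:Ep; [|discriminate]; intro E; injection E; intros; subst.
  exists u, hist, vis, p; apply Nat.ltb_lt in Ep; repeat split; auto.
Qed.

Lemma state_defined_le j k : j <= k -> state k <> None -> state j <> None.
Proof.
  induction 1 as [|k _ IH]; auto; intro Hk; apply IH.
  destruct (state (S k)) as [[[w hist'] vis']|] eqn:E; [|congruence].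
  destruct (state_S _ _ _ _ E) as (u & hist & vis & p & E1 & _); congruence.
Qed.

Lemma pos_S j : state (S j) <> None -> pos (S j) = nbr G (pos j) (port j) /\ port j < deg G (pos j).
Proof.
  intro H; destruct (state (S j)) as [[[w hist'] vis']|] eqn:E; [|congruence].
  destruct (state_S _ _ _ _ E) as (u & hist & vis & p & E1 & E2 & E3 & E4 & _).
  unfold pos, port; rewrite E, E1, E2; auto.
Qed.

Lemma pos_lt j : v < n -> state j <> None -> pos j < n.
Proof.
  intro Hv; induction j as [|j IH]; intro H; [unfold pos, state; simpl; auto|].
  destruct (pos_S j H) as [-> Hp]; apply pg_nbr_lt; auto.
  apply IH, (state_defined_le j (S j)); auto.
Qed.

Lemma visited_positions j u hist vis :
  state j = Some (u, hist, vis) -> vis = map pos (seq 0 (S j)).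
Proof.
  revert u hist vis; induction j as [|j IH]; intros u hist vis E.
  - unfold state in E; simpl in E; injection E; intros; subst; reflexivity.
  - destruct (state_S _ _ _ _ E) as (u' & hist0 & vis0 & p & E1 & _ & _ & E4 & _ & E6).
    rewrite E6, (IH _ _ _ E1), (seq_S (S j)), map_app.
    f_equal; simpl; unfold pos; rewrite E; reflexivity.
Qed.

Lemma explores_in_visits_all k : explores_in A adv G v k ->
  state k <> None /\ forall x, x < n -> exists j, j <= k /\ pos j = x.
Proof.
  intros (u & hist & vis & Ek & _ & Hvis); split; [unfold state; congruence|].
  intros x Hx; specialize (Hvis x Hx); rewrite (visited_positions _ _ _ _ Ek) in Hvis.
  apply in_map_iff in Hvis; destruct Hvis as [j [Ej Hj]]; apply in_seq in Hj.
  exists j; split; [lia|auto].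
Qed.

End Run.

Section HardGraphs.
Variables h m : nat.
Hypotheses (Hh : 2 <= h) (Hm : 4 <= m) (He : Nat.even m = true).

(** Nodes [0, ..., m-1] form the ring, nodes [m, ..., order-1] the clique. *)
Definition clique_size := 2 * h - 2.
Definition order := m + clique_size.

Definition ring_succ i := if i + 1 =? m then 0 else i + 1.
Definition ring_pred i := if i =? 0 then m - 1 else i - 1.
Definition hdeg u := if u <? m then 2 * h else m + clique_size - 1.

Lemma ring_succ_lt i : i < m -> ring_succ i < m.
Proof. unfold ring_succ; decide_tests; lia. Qed.

Lemma ring_pred_lt i : i < m -> ring_pred i < m.
Proof. unfold ring_pred; decide_tests; lia. Qed.

Lemma ring_pred_succ i : i < m -> ring_pred (ring_succ i) = i.
Proof. unfold ring_succ, ring_pred; decide_tests; lia. Qed.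

Lemma ring_succ_pred i : i < m -> ring_succ (ring_pred i) = i.
Proof. unfold ring_succ, ring_pred; decide_tests; lia. Qed.

Lemma ring_succ_neq i : i < m -> ring_succ i <> i.
Proof. unfold ring_succ; decide_tests; lia. Qed.

Lemma ring_pred_neq i : i < m -> ring_pred i <> i.
Proof. unfold ring_pred; decide_tests; lia. Qed.

Lemma ring_succ_neq_pred i : i < m -> ring_succ i <> ring_pred i.
Proof. unfold ring_succ, ring_pred; decide_tests; lia. Qed.

(** This is where [m] must be even (at [i = 0]). *)
Lemma even_ring_pred i : i < m -> Nat.even (ring_pred i) = negb (Nat.even i).
Proof.
  intro Hi; unfold ring_pred; decide_tests.
  - subst; replace (m - 1) with (Nat.pred m) by lia.
    rewrite Nat.even_pred, <- Nat.negb_even, He by lia; reflexivity.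
  - replace (i - 1) with (Nat.pred i) by lia.
    rewrite Nat.even_pred by lia; apply eq_sym, Nat.negb_even.
Qed.

Lemma hdeg_ring u : u < m -> hdeg u = 2 * h.
Proof. unfold hdeg; decide_tests; lia. Qed.

Lemma hdeg_clique u : m <= u -> hdeg u = m + clique_size - 1.
Proof. unfold hdeg; decide_tests; lia. Qed.

Section Labelled.
Variable phi : list nat.

(** The ring edge [{i, i+1}] carries the same port number [ring_port i] at
    both ends. At a ring node the [2h - 2] ports other than its two ring
    ports lead, in order, to the clique nodes; at a clique node port [p < m]
    leads to ring node [p] and the remaining ports, in order, to the other
    clique nodes. *)
Definition ring_port i := if Nat.even i then nth i phi 0 mod h else h + nth i phi 0 mod h.

(** The two ring ports of ring node [i], one in [[0,h)], one in [[h,2h)]. *)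
Definition port_lo i := if Nat.even i then ring_port i else ring_port (ring_pred i).
Definition port_hi i := if Nat.even i then ring_port (ring_pred i) else ring_port i.

Definition clique_index i p :=
  if p <? h then skip (port_lo i) p else (h - 1) + skip (port_hi i - h) (p - h).
Definition clique_port i j :=
  if j <? h - 1 then unskip (port_lo i) j else h + unskip (port_hi i - h) (j - (h - 1)).

Definition hnbr u p :=
  if u <? m then
    if p =? ring_port u then ring_succ u
    else if p =? ring_port (ring_pred u) then ring_pred u
    else m + clique_index u p
  else if p <? m then p else m + unskip (u - m) (p - m).

Definition hbport u p :=
  if u <? m then
    if p =? ring_port u then ring_port u
    else if p =? ring_port (ring_pred u) then ring_port (ring_pred u)
    else u
  else if p <? m then clique_port p (u - m) else m + skip (unskip (u - m) (p - m)) (u - m).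

Lemma ring_port_even i : Nat.even i = true -> ring_port i < h.
Proof. unfold ring_port; intros ->; apply Nat.mod_upper_bound; lia. Qed.

Lemma ring_port_odd i : Nat.even i = false -> h <= ring_port i < 2 * h.
Proof. unfold ring_port; intros ->; pose proof (Nat.mod_upper_bound (nth i phi 0) h); lia. Qed.

Lemma ring_port_lt i : ring_port i < 2 * h.
Proof.
  destruct (Nat.even i) eqn:E; [pose proof (ring_port_even i E)|pose proof (ring_port_odd i E)]; lia.
Qed.

Lemma port_lo_lt i : i < m -> port_lo i < h.
Proof.
  intro Hi; unfold port_lo; destruct (Nat.even i) eqn:E; apply ring_port_even; auto.
  rewrite even_ring_pred, E; auto.
Qed.

Lemma port_hi_bounds i : i < m -> h <= port_hi i < 2 * h.
Proof.
  intro Hi; unfold port_hi; destruct (Nat.even i) eqn:E; apply ring_port_odd; auto.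
  rewrite even_ring_pred, E; auto.
Qed.

Lemma ring_port_lo_hi i :
  (ring_port i = port_lo i /\ ring_port (ring_pred i) = port_hi i) \/
  (ring_port i = port_hi i /\ ring_port (ring_pred i) = port_lo i).
Proof. unfold port_lo, port_hi; destruct (Nat.even i); auto. Qed.

Lemma ring_port_neq_pred i : i < m -> ring_port i <> ring_port (ring_pred i).
Proof.
  intro Hi; pose proof (port_lo_lt i Hi); pose proof (port_hi_bounds i Hi).
  destruct (ring_port_lo_hi i); lia.
Qed.

Definition clique_port_at i p := p <> ring_port i /\ p <> ring_port (ring_pred i).

Lemma clique_port_atE i p : clique_port_at i p <-> p <> port_lo i /\ p <> port_hi i.
Proof. unfold clique_port_at; destruct (ring_port_lo_hi i) as [[-> ->]|[-> ->]]; tauto. Qed.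

Lemma clique_index_lt i p : i < m -> p < 2 * h -> clique_port_at i p -> clique_index i p < clique_size.
Proof.
  intros Hi Hp Hs; apply clique_port_atE in Hs.
  pose proof (port_lo_lt i Hi); pose proof (port_hi_bounds i Hi).
  pose proof (skip_lt (port_lo i) p h); pose proof (skip_lt (port_hi i - h) (p - h) h).
  unfold clique_index, clique_size; decide_tests; lia.
Qed.

Lemma clique_port_lt i j : i < m -> j < clique_size -> clique_port i j < 2 * h.
Proof.
  intros Hi Hj; pose proof (port_lo_lt i Hi); pose proof (port_hi_bounds i Hi).
  pose proof (unskip_le (port_lo i) j); pose proof (unskip_le (port_hi i - h) (j - (h - 1))).
  unfold clique_port, clique_size in *; decide_tests; lia.
Qed.

Lemma clique_port_is_clique i j : i < m -> j < clique_size -> clique_port_at i (clique_port i j).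
Proof.
  intros Hi Hj; apply clique_port_atE.
  pose proof (port_lo_lt i Hi); pose proof (port_hi_bounds i Hi).
  pose proof (unskip_le (port_lo i) j); pose proof (unskip_neq (port_lo i) j).
  pose proof (unskip_neq (port_hi i - h) (j - (h - 1))).
  unfold clique_port, clique_size in *; decide_tests; lia.
Qed.

Lemma clique_indexK i j : i < m -> j < clique_size -> clique_index i (clique_port i j) = j.
Proof.
  intros Hi Hj; pose proof (port_lo_lt i Hi); pose proof (port_hi_bounds i Hi).
  pose proof (unskip_le (port_lo i) j); pose proof (skip_unskip (port_lo i) j).
  pose proof (skip_unskip (port_hi i - h) (j - (h - 1))).
  unfold clique_port, clique_index, clique_size in *; decide_tests;
    try replace (h + unskip (port_hi i - h) (j - (h - 1)) - h) with (unskip (port_hi i - h) (j - (h - 1))) by lia;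
    lia.
Qed.

Lemma clique_portK i p : i < m -> p < 2 * h -> clique_port_at i p -> clique_port i (clique_index i p) = p.
Proof.
  intros Hi Hp Hs; apply clique_port_atE in Hs.
  pose proof (port_lo_lt i Hi); pose proof (port_hi_bounds i Hi).
  pose proof (skip_lt (port_lo i) p h); pose proof (skip_lt (port_hi i - h) (p - h) h).
  unfold clique_port, clique_index; decide_tests.
  - apply unskip_skip; lia.
  - lia.
  - lia.
  - replace (h - 1 + skip (port_hi i - h) (p - h) - (h - 1)) with (skip (port_hi i - h) (p - h)) by lia.
    rewrite unskip_skip; lia.
Qed.

Lemma hnbr_ring_succ u : u < m -> hnbr u (ring_port u) = ring_succ u.
Proof. unfold hnbr; decide_tests; lia. Qed.

Lemma hnbr_ring_pred u : u < m -> hnbr u (ring_port (ring_pred u)) = ring_pred u.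
Proof. intro Hu; pose proof (ring_port_neq_pred u Hu); unfold hnbr; decide_tests; lia. Qed.

Lemma hnbr_ring_clique u p : u < m -> clique_port_at u p -> hnbr u p = m + clique_index u p.
Proof. intros Hu [H1 H2]; unfold hnbr; decide_tests; lia. Qed.

Lemma hbport_ring_succ u : u < m -> hbport u (ring_port u) = ring_port u.
Proof. unfold hbport; decide_tests; lia. Qed.

Lemma hbport_ring_pred u : u < m -> hbport u (ring_port (ring_pred u)) = ring_port (ring_pred u).
Proof. intro Hu; pose proof (ring_port_neq_pred u Hu); unfold hbport; decide_tests; lia. Qed.

Lemma hbport_ring_clique u p : u < m -> clique_port_at u p -> hbport u p = u.
Proof. intros Hu [H1 H2]; unfold hbport; decide_tests; lia. Qed.

Lemma hnbr_clique_ring u p : m <= u -> p < m -> hnbr u p = p.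
Proof. unfold hnbr; decide_tests; lia. Qed.

Lemma hbport_clique_ring u p : m <= u -> p < m -> hbport u p = clique_port p (u - m).
Proof. unfold hbport; decide_tests; lia. Qed.

Lemma hnbr_clique_clique u p : m <= u -> m <= p -> hnbr u p = m + unskip (u - m) (p - m).
Proof. unfold hnbr; decide_tests; lia. Qed.

Lemma hbport_clique_clique u p : m <= u -> m <= p ->
  hbport u p = m + skip (unskip (u - m) (p - m)) (u - m).
Proof. unfold hbport; decide_tests; lia. Qed.

Lemma ring_port_cases u p : p = ring_port u \/ p = ring_port (ring_pred u) \/ clique_port_at u p.
Proof.
  unfold clique_port_at.
  destruct (Nat.eq_dec p (ring_port u)); [auto|destruct (Nat.eq_dec p (ring_port (ring_pred u)))]; auto.
Qed.

Lemma hnbr_lt u p : u < order -> p < hdeg u -> hnbr u p < order.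
Proof.
  unfold order; intros Hu Hp; destruct (Nat.lt_ge_cases u m) as [Hu'|Hu'].
  - rewrite hdeg_ring in Hp by auto; destruct (ring_port_cases u p) as [->|[->|Hs]].
    + rewrite hnbr_ring_succ by auto; pose proof (ring_succ_lt u Hu'); lia.
    + rewrite hnbr_ring_pred by auto; pose proof (ring_pred_lt u Hu'); lia.
    + rewrite hnbr_ring_clique by auto; pose proof (clique_index_lt u p Hu' Hp Hs); lia.
  - rewrite hdeg_clique in Hp by auto; destruct (Nat.lt_ge_cases p m).
    + rewrite hnbr_clique_ring; lia.
    + rewrite hnbr_clique_clique by auto; pose proof (unskip_lt (u - m) (p - m) clique_size); lia.
Qed.

Lemma hbport_lt u p : u < order -> p < hdeg u -> hbport u p < hdeg (hnbr u p).
Proof.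
  unfold order; intros Hu Hp; destruct (Nat.lt_ge_cases u m) as [Hu'|Hu'].
  - rewrite hdeg_ring in Hp by auto; destruct (ring_port_cases u p) as [->|[->|Hs]].
    + rewrite hnbr_ring_succ, hbport_ring_succ, hdeg_ring by (auto; apply ring_succ_lt; auto).
      apply ring_port_lt.
    + rewrite hnbr_ring_pred, hbport_ring_pred, hdeg_ring by (auto; apply ring_pred_lt; auto).
      apply ring_port_lt.
    + rewrite hnbr_ring_clique, hbport_ring_clique, hdeg_clique by (auto; lia).
      unfold clique_size; lia.
  - rewrite hdeg_clique in Hp by auto; destruct (Nat.lt_ge_cases p m).
    + rewrite hnbr_clique_ring, hbport_clique_ring, hdeg_ring by auto.
      apply clique_port_lt; auto; lia.
    + rewrite hnbr_clique_clique, hbport_clique_clique, hdeg_clique by (auto; lia).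
      pose proof (unskip_lt (u - m) (p - m) clique_size); pose proof (unskip_neq (u - m) (p - m)).
      pose proof (skip_lt (unskip (u - m) (p - m)) (u - m) clique_size); lia.
Qed.

Lemma hnbr_back u p : u < order -> p < hdeg u -> hnbr (hnbr u p) (hbport u p) = u.
Proof.
  unfold order; intros Hu Hp; destruct (Nat.lt_ge_cases u m) as [Hu'|Hu'].
  - rewrite hdeg_ring in Hp by auto; destruct (ring_port_cases u p) as [->|[->|Hs]].
    + rewrite hnbr_ring_succ, hbport_ring_succ by auto.
      pose proof (hnbr_ring_pred (ring_succ u) (ring_succ_lt u Hu')) as E.
      rewrite ring_pred_succ in E; auto.
    + rewrite hnbr_ring_pred, hbport_ring_pred, hnbr_ring_succ by (auto; apply ring_pred_lt; auto).
      apply ring_succ_pred; auto.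
    + rewrite (hnbr_ring_clique u p), hbport_ring_clique, hnbr_clique_ring by (auto; lia); auto.
  - rewrite hdeg_clique in Hp by auto; destruct (Nat.lt_ge_cases p m).
    + assert (Hj : u - m < clique_size) by (unfold clique_size in *; lia).
      rewrite (hnbr_clique_ring u p), hbport_clique_ring, hnbr_ring_clique, clique_indexK by
        (auto; apply clique_port_is_clique; auto); lia.
    + rewrite (hnbr_clique_clique u p), hbport_clique_clique, hnbr_clique_clique by (auto; lia).
      replace (m + unskip (u - m) (p - m) - m) with (unskip (u - m) (p - m)) by lia.
      replace (m + skip (unskip (u - m) (p - m)) (u - m) - m)
        with (skip (unskip (u - m) (p - m)) (u - m)) by lia.
      rewrite unskip_skip; [lia|apply not_eq_sym, unskip_neq].
Qed.

Lemma hbport_back u p : u < order -> p < hdeg u -> hbport (hnbr u p) (hbport u p) = p.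
Proof.
  unfold order; intros Hu Hp; destruct (Nat.lt_ge_cases u m) as [Hu'|Hu'].
  - rewrite hdeg_ring in Hp by auto; destruct (ring_port_cases u p) as [->|[->|Hs]].
    + rewrite hnbr_ring_succ, hbport_ring_succ by auto.
      pose proof (hbport_ring_pred (ring_succ u) (ring_succ_lt u Hu')) as E.
      rewrite ring_pred_succ in E; auto.
    + rewrite hnbr_ring_pred, hbport_ring_pred, hbport_ring_succ by (auto; apply ring_pred_lt; auto).
      auto.
    + rewrite (hnbr_ring_clique u p), (hbport_ring_clique u p), hbport_clique_ring by (auto; lia).
      replace (m + clique_index u p - m) with (clique_index u p) by lia; apply clique_portK; auto.
  - rewrite hdeg_clique in Hp by auto; destruct (Nat.lt_ge_cases p m).
    + assert (clique_port_at p (clique_port p (u - m)))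
        by (apply clique_port_is_clique; auto; unfold clique_size in *; lia).
      rewrite (hnbr_clique_ring u p), (hbport_clique_ring u p), hbport_ring_clique; auto.
    + rewrite (hnbr_clique_clique u p), (hbport_clique_clique u p), hbport_clique_clique by (auto; lia).
      replace (m + unskip (u - m) (p - m) - m) with (unskip (u - m) (p - m)) by lia.
      replace (m + skip (unskip (u - m) (p - m)) (u - m) - m)
        with (skip (unskip (u - m) (p - m)) (u - m)) by lia.
      rewrite unskip_skip, skip_unskip; [lia|apply not_eq_sym, unskip_neq].
Qed.

Lemma hnbr_neq u p : u < order -> p < hdeg u -> hnbr u p <> u.
Proof.
  unfold order; intros Hu Hp; destruct (Nat.lt_ge_cases u m) as [Hu'|Hu'].
  - destruct (ring_port_cases u p) as [->|[->|Hs]].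
    + rewrite hnbr_ring_succ by auto; apply ring_succ_neq; auto.
    + rewrite hnbr_ring_pred by auto; apply ring_pred_neq; auto.
    + rewrite hnbr_ring_clique by auto; lia.
  - destruct (Nat.lt_ge_cases p m).
    + rewrite hnbr_clique_ring by auto; lia.
    + rewrite hnbr_clique_clique by auto; pose proof (unskip_neq (u - m) (p - m)); lia.
Qed.

Lemma hnbr_inj u p q : u < order -> p < hdeg u -> q < hdeg u -> hnbr u p = hnbr u q -> p = q.
Proof.
  unfold order; intros Hu Hp Hq E; destruct (Nat.lt_ge_cases u m) as [Hu'|Hu'].
  - rewrite hdeg_ring in Hp, Hq by auto.
    pose proof (ring_succ_neq_pred u Hu'); pose proof (ring_succ_lt u Hu'); pose proof (ring_pred_lt u Hu').
    destruct (ring_port_cases u p) as [->|[->|Hs]], (ring_port_cases u q) as [->|[->|Hs']]; auto;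
      repeat first [rewrite hnbr_ring_succ in E by auto | rewrite hnbr_ring_pred in E by auto
                   | rewrite hnbr_ring_clique in E by auto]; try lia.
    rewrite <- (clique_portK u p), <- (clique_portK u q); auto; f_equal; lia.
  - rewrite hdeg_clique in Hp, Hq by auto.
    destruct (Nat.lt_ge_cases p m), (Nat.lt_ge_cases q m);
      repeat first [rewrite hnbr_clique_ring in E by auto | rewrite hnbr_clique_clique in E by auto]; try lia.
    assert (Eu : unskip (u - m) (p - m) = unskip (u - m) (q - m)) by lia.
    apply unskip_inj in Eu; lia.
Qed.

Definition hadj x y := x < order /\ exists p, p < hdeg x /\ hnbr x p = y.

Lemma reaches_0 u : u < order -> clos_refl_trans nat hadj u 0.
Proof.
  unfold order; intros Hu; destruct (Nat.lt_ge_cases u m) as [Hu'|Hu'].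
  - induction u as [|u IH]; [apply rt_refl|]; eapply rt_trans; [|apply IH; lia].
    apply rt_step; split; [unfold order; lia|].
    exists (ring_port (ring_pred (S u))); rewrite hdeg_ring by auto; split; [apply ring_port_lt|].
    rewrite hnbr_ring_pred by auto; unfold ring_pred; simpl; lia.
  - apply rt_step; split; [unfold order; lia|].
    exists 0; rewrite hdeg_clique by auto; split; [unfold clique_size; lia|].
    rewrite hnbr_clique_ring; lia.
Qed.

Lemma reached_from_0 u : u < order -> clos_refl_trans nat hadj 0 u.
Proof.
  unfold order; intros Hu; destruct (Nat.lt_ge_cases u m) as [Hu'|Hu'].
  - induction u as [|u IH]; [apply rt_refl|]; eapply rt_trans; [apply IH; lia|].
    apply rt_step; split; [unfold order; lia|].
    exists (ring_port u); rewrite hdeg_ring by lia; split; [apply ring_port_lt|].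
    rewrite hnbr_ring_succ by lia; unfold ring_succ; decide_tests; lia.
  - apply rt_step; split; [unfold order; lia|].
    exists (clique_port 0 (u - m)); rewrite hdeg_ring by lia; split; [apply clique_port_lt; lia|].
    rewrite hnbr_ring_clique, clique_indexK; try lia; apply clique_port_is_clique; lia.
Qed.

Lemma hgraph_connected u w : u < order -> w < order -> clos_refl_trans nat hadj u w.
Proof. intros; eapply rt_trans; [apply reaches_0|apply reached_from_0]; auto. Qed.

Definition hard_graph : pgraph order :=
  {| deg := hdeg; nbr := hnbr; bport := hbport;
     pg_nbr_lt := hnbr_lt; pg_bport_lt := hbport_lt;
     pg_back_nbr := hnbr_back; pg_back_port := hbport_back;
     pg_noloop := hnbr_neq; pg_simple := hnbr_inj;
     pg_connected := hgraph_connected |}.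

Lemma hard_graph_adj_succ i : i < order -> adj hard_graph i ((i + 1) mod order).
Proof.
  intro Hi; split; [auto|]; cbn [deg nbr hard_graph].
  destruct (Nat.eq_dec (i + 1) order) as [Ei|Ei].
  - rewrite Ei, Nat.Div0.mod_same; unfold order, clique_size in Ei.
    exists 0; rewrite hdeg_clique by lia; split; [unfold clique_size; lia|].
    rewrite hnbr_clique_ring; lia.
  - rewrite Nat.mod_small by lia.
    destruct (Nat.lt_ge_cases (i + 1) m) as [H1|H1]; [|destruct (Nat.eq_dec (i + 1) m) as [H2|H2]].
    + exists (ring_port i); rewrite hdeg_ring by lia; split; [apply ring_port_lt|].
      rewrite hnbr_ring_succ by lia; unfold ring_succ; decide_tests; lia.
    + exists (clique_port i 0); rewrite hdeg_ring by lia.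
      assert (0 < clique_size) by (unfold clique_size; lia).
      split; [apply clique_port_lt; lia|].
      rewrite hnbr_ring_clique, clique_indexK by (try apply clique_port_is_clique; lia); lia.
    + exists i; unfold order in *; rewrite hdeg_clique by lia; split; [lia|].
      rewrite hnbr_clique_clique by lia; unfold unskip; rewrite Nat.ltb_irrefl; lia.
Qed.

Lemma hard_graph_hamiltonian : hamiltonian hard_graph.
Proof.
  split; [unfold order, clique_size; lia|].
  exists (seq 0 order); split; [apply length_seq|]; split; [apply seq_NoDup|].
  split; [apply Forall_forall; intros x Hx; apply in_seq in Hx; lia|].
  intros i Hi; rewrite !seq_nth by (try apply Nat.mod_upper_bound; lia).
  apply hard_graph_adj_succ; auto.
Qed.

End Labelled.

(** What the agent learns from taking port [p] at node [u], beyond what all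
    graphs [hard_graph phi] have in common: [0] and [1] for the forward and
    backward ring ports, otherwise [2 +] the datum fixing the arrival node
    (from a ring node) or the arrival port (into a ring node). *)
Definition port_code phi u p :=
  if u <? m then
    if p =? ring_port phi u then 0
    else if p =? ring_port phi (ring_pred u) then 1
    else 2 + clique_index phi u p
  else if p <? m then 2 + clique_port phi p (u - m) else 2.

Lemma port_code0 phi u p : u < m -> port_code phi u p = 0 -> p = ring_port phi u.
Proof. unfold port_code; decide_tests; lia. Qed.

Lemma port_code1 phi u p : u < m -> port_code phi u p = 1 -> p = ring_port phi (ring_pred u).
Proof. unfold port_code; decide_tests; lia. Qed.

Lemma port_code_ring_clique phi u p : u < m -> 2 <= port_code phi u p ->
  clique_port_at phi u p /\ port_code phi u p = 2 + clique_index phi u p.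
Proof. unfold port_code, clique_port_at; decide_tests; split; lia. Qed.

Lemma port_code_clique phi u p : m <= u -> 2 <= port_code phi u p.
Proof. unfold port_code; decide_tests; lia. Qed.

Lemma port_code_clique_ring phi u p : m <= u -> p < m ->
  port_code phi u p = 2 + clique_port phi p (u - m).
Proof. unfold port_code; decide_tests; lia. Qed.

Lemma port_code_clique_clique phi u p : m <= u -> m <= p -> port_code phi u p = 2.
Proof. unfold port_code; decide_tests; lia. Qed.

Lemma port_code_lt phi u p : u < order -> p < hdeg u -> port_code phi u p < 2 + 2 * h.
Proof.
  intros Hu Hp; destruct (Nat.lt_ge_cases u m) as [Hu'|Hu'].
  - rewrite hdeg_ring in Hp by auto.
    destruct (port_code phi u p) as [|[|c]] eqn:C; try lia; rewrite <- C.
    destruct (port_code_ring_clique phi u p Hu') as [Hc ->]; [lia|].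
    pose proof (clique_index_lt phi u p Hu' Hp Hc); unfold clique_size in *; lia.
  - rewrite hdeg_clique in Hp by auto; destruct (Nat.lt_ge_cases p m).
    + rewrite port_code_clique_ring by auto.
      pose proof (clique_port_lt phi p (u - m)); unfold order, clique_size in *; lia.
    + rewrite port_code_clique_clique; lia.
Qed.

Lemma same_code_same_edge phi1 phi2 u p : u < order -> p < hdeg u ->
  port_code phi1 u p = port_code phi2 u p ->
  hnbr phi1 u p = hnbr phi2 u p /\ hbport phi1 u p = hbport phi2 u p.
Proof.
  intros Hu Hp Hc; destruct (Nat.lt_ge_cases u m) as [Hu'|Hu'].
  - destruct (port_code phi1 u p) as [|[|c]] eqn:C1; symmetry in Hc.
    + pose proof (port_code0 phi1 u p Hu' C1) as E1; pose proof (port_code0 phi2 u p Hu' Hc) as E2.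
      pose proof (hnbr_ring_succ phi1 u Hu') as N1; pose proof (hnbr_ring_succ phi2 u Hu') as N2.
      pose proof (hbport_ring_succ phi1 u Hu') as B1; pose proof (hbport_ring_succ phi2 u Hu') as B2.
      rewrite <- E1 in N1, B1; rewrite <- E2 in N2, B2; rewrite N1, N2, B1, B2; auto.
    + pose proof (port_code1 phi1 u p Hu' C1) as E1; pose proof (port_code1 phi2 u p Hu' Hc) as E2.
      pose proof (hnbr_ring_pred phi1 u Hu') as N1; pose proof (hnbr_ring_pred phi2 u Hu') as N2.
      pose proof (hbport_ring_pred phi1 u Hu') as B1; pose proof (hbport_ring_pred phi2 u Hu') as B2.
      rewrite <- E1 in N1, B1; rewrite <- E2 in N2, B2; rewrite N1, N2, B1, B2; auto.
    + destruct (port_code_ring_clique phi1 u p Hu') as [S1 E1]; [lia|].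
      destruct (port_code_ring_clique phi2 u p Hu') as [S2 E2]; [lia|].
      rewrite hnbr_ring_clique, hnbr_ring_clique, hbport_ring_clique, hbport_ring_clique by auto.
      split; [lia|auto].
  - destruct (Nat.lt_ge_cases p m).
    + rewrite !port_code_clique_ring in Hc by auto.
      rewrite hnbr_clique_ring, hnbr_clique_ring, hbport_clique_ring, hbport_clique_ring by auto.
      split; [auto|lia].
    + rewrite hnbr_clique_clique, hnbr_clique_clique, hbport_clique_clique, hbport_clique_clique by auto.
      auto.
Qed.

Variable A : algorithm.

Definition hstate phi adv j := state order (hard_graph phi) A adv 0 j.
Definition hpos phi adv j := pos order (hard_graph phi) A adv 0 j.
Definition hport phi adv j := port order (hard_graph phi) A adv 0 j.
Definition hcode phi adv j := port_code phi (hpos phi adv j) (hport phi adv j).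

Lemma hpos_lt phi adv j : hstate phi adv j <> None -> hpos phi adv j < order.
Proof. apply pos_lt; unfold order, clique_size; lia. Qed.

Lemma same_codes_same_run phi1 phi2 adv k : hstate phi1 adv k <> None ->
  (forall j, j < k -> hcode phi1 adv j = hcode phi2 adv j) ->
  forall j, j <= k -> hstate phi1 adv j = hstate phi2 adv j.
Proof.
  intros Hk Hc; induction j as [|j IH]; intro Hj; [reflexivity|].
  specialize (IH ltac:(lia)); specialize (Hc j ltac:(lia)).
  assert (Hs : hstate phi1 adv (S j) <> None) by (apply (state_defined_le _ _ _ _ _ (S j) k); auto).
  assert (Hu : hpos phi1 adv j < order)
    by (apply hpos_lt, (state_defined_le _ _ _ _ _ j k); auto; lia).
  unfold hcode, hpos, hport, pos, port in Hc, Hu.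
  fold (hstate phi1 adv j) in Hc, Hu; fold (hstate phi2 adv j) in Hc.
  unfold hstate, state in *; simpl run; simpl run in Hs; rewrite <- IH in Hc |- *.
  destruct (run A adv (hard_graph phi1) 0 j) as [[[u hist] vis]|]; [|congruence].
  simpl in Hc; destruct (A adv (hdeg 0) hist) as [|p]; [congruence|].
  destruct (p <? hdeg u) eqn:Ep; [|congruence]; apply Nat.ltb_lt in Ep.
  destruct (same_code_same_edge phi1 phi2 u p Hu Ep Hc) as [-> ->]; reflexivity.
Qed.

(** Ring edge [{i, i+1}] is revealed at step [j] if the agent crosses it then. *)
Definition reveals_at phi adv i j :=
  orb (andb (hcode phi adv j =? 0) (hpos phi adv j =? i))
      (andb (hcode phi adv j =? 1) (ring_pred (hpos phi adv j) =? i)).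
Definition revealed phi adv k i := existsb (reveals_at phi adv i) (seq 0 k).
Definition hidden_labels phi adv k :=
  map (fun i => nth i phi 0) (filter (fun i => negb (revealed phi adv k i)) (seq 0 m)).
Definition code_trace phi adv k := map (hcode phi adv) (seq 0 k).

Lemma reveals_at_port phi adv i j :
  reveals_at phi adv i j = true -> hport phi adv j = ring_port phi i.
Proof.
  unfold reveals_at; intro H; apply Bool.orb_true_iff in H.
  assert (Hring : hcode phi adv j < 2 -> hpos phi adv j < m).
  { intro Hc; destruct (Nat.lt_ge_cases (hpos phi adv j) m) as [|Hu]; auto.
    pose proof (port_code_clique phi _ (hport phi adv j) Hu); unfold hcode in Hc; lia. }
  destruct H as [H|H]; apply Bool.andb_true_iff in H; destruct H as [H1 H2];
    apply Nat.eqb_eq in H1, H2; unfold hcode in H1.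
  - subst i; apply port_code0; auto; apply Hring; unfold hcode; lia.
  - subst i; apply port_code1; auto; apply Hring; unfold hcode; lia.
Qed.

Lemma ring_port_inj phi1 phi2 i : In phi1 (labellings h m) -> In phi2 (labellings h m) -> i < m ->
  ring_port phi1 i = ring_port phi2 i -> nth i phi1 0 = nth i phi2 0.
Proof.
  intros [L1 F1]%labellingsP [L2 F2]%labellingsP Hi E; unfold ring_port in E.
  assert (nth i phi1 0 < h) by (apply (proj1 (Forall_forall _ _) F1), nth_In; lia).
  assert (nth i phi2 0 < h) by (apply (proj1 (Forall_forall _ _) F2), nth_In; lia).
  rewrite !Nat.mod_small in E by auto; destruct (Nat.even i); lia.
Qed.

Theorem encoding_injective phi1 phi2 adv k :
  In phi1 (labellings h m) -> In phi2 (labellings h m) -> hstate phi1 adv k <> None ->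
  code_trace phi1 adv k = code_trace phi2 adv k ->
  hidden_labels phi1 adv k = hidden_labels phi2 adv k -> phi1 = phi2.
Proof.
  intros V1 V2 Hk Hc Hu.
  assert (Hcode : forall j, j < k -> hcode phi1 adv j = hcode phi2 adv j).
  { intros j Hj; assert (E := f_equal (fun l => nth j l 0) Hc); unfold code_trace in E.
    rewrite !nth_map_seq in E by lia; auto. }
  assert (Hpos : forall j, j <= k -> hpos phi1 adv j = hpos phi2 adv j /\ hport phi1 adv j = hport phi2 adv j).
  { intros j Hj; pose proof (same_codes_same_run phi1 phi2 adv k Hk Hcode j Hj) as Hr.
    unfold hpos, hport, pos, port; unfold hstate in Hr; rewrite Hr; auto. }
  assert (Hrev : forall i, revealed phi1 adv k i = revealed phi2 adv k i).
  { intro i; apply existsb_ext_in; intros j Hj; apply in_seq in Hj; unfold reveals_at.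
    rewrite Hcode, (proj1 (Hpos j ltac:(lia))) by lia; auto. }
  pose proof V1 as [L1 _]%labellingsP; pose proof V2 as [L2 _]%labellingsP.
  apply (nth_ext _ _ 0 0); [congruence|]; intros i Hi; rewrite L1 in Hi.
  destruct (revealed phi1 adv k i) eqn:Ti.
  - pose proof Ti as Ti2; rewrite Hrev in Ti2; unfold revealed in Ti, Ti2.
    apply existsb_exists in Ti; destruct Ti as [j [Hj Tj]]; apply in_seq in Hj.
    apply ring_port_inj; auto; rewrite <- (reveals_at_port _ _ _ _ Tj).
    assert (Tj2 : reveals_at phi2 adv i j = true).
    { unfold reveals_at in *; rewrite <- Hcode, <- (proj1 (Hpos j ltac:(lia))) by lia; auto. }
    rewrite <- (reveals_at_port _ _ _ _ Tj2); apply Hpos; lia.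
  - unfold hidden_labels in Hu.
    rewrite (filter_ext (fun i => negb (revealed phi2 adv k i)) (fun i => negb (revealed phi1 adv k i))) in Hu
      by (intro; rewrite Hrev; auto).
    apply (map_filter_eq _ _ _ _ Hu); [apply in_seq; lia|rewrite Ti; auto].
Qed.

Section OneRun.
Variables (phi : list nat) (adv : advice) (k : nat).
Hypothesis Hrun : hstate phi adv k <> None.
Hypothesis Hall : forall x, x < order -> exists j, j <= k /\ hpos phi adv j = x.

Local Notation P := (hpos phi adv).
Local Notation C := (hcode phi adv).
Local Notation T := (revealed phi adv k).

Definition clique_time := count (fun j => m <=? P j) (seq 0 (S k)).

Lemma hstate_defined j : j <= k -> hstate phi adv j <> None.
Proof. intro; apply (state_defined_le _ _ _ _ _ j k); auto. Qed.

Lemma hpos_S j : j < k -> P (S j) = hnbr phi (P j) (hport phi adv j) /\ hport phi adv j < hdeg (P j).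
Proof. intro Hj; apply (pos_S _ (hard_graph phi) A adv 0 j), (hstate_defined (S j)); lia. Qed.

Lemma clique_time_bound : clique_time <= S k - m.
Proof.
  unfold clique_time; pose proof (count_negb (fun j => m <=? P j) (seq 0 (S k))) as E.
  rewrite length_seq in E.
  enough (m <= count (fun j => negb (m <=? P j)) (seq 0 (S k))) by lia.
  unfold count; rewrite <- (length_map P), <- (length_seq m 0) at 1.
  apply NoDup_incl_length; [apply seq_NoDup|]; intros x Hx; apply in_seq in Hx.
  destruct (Hall x ltac:(unfold order; lia)) as [j [Hj Ej]].
  apply in_map_iff; exists j; split; auto; apply filter_In; split; [apply in_seq; lia|].
  rewrite Ej; apply Bool.negb_true_iff, Nat.leb_gt; lia.
Qed.

Lemma hcode_lt j : j < k -> C j < 2 + 2 * h.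
Proof.
  intro Hj; apply port_code_lt; [apply hpos_lt, hstate_defined; lia|apply hpos_S; auto].
Qed.

Lemma clique_code_touches_clique j : j < k -> 2 <= C j -> orb (m <=? P j) (m <=? P (S j)) = true.
Proof.
  intros Hj Hc; apply Bool.orb_true_iff; destruct (Nat.lt_ge_cases (P j) m) as [Hp|Hp].
  - right; destruct (hpos_S j Hj) as [-> _]; unfold hcode in Hc.
    destruct (port_code_ring_clique phi _ _ Hp Hc) as [S1 _].
    rewrite hnbr_ring_clique by auto; apply Nat.leb_le; lia.
  - left; apply Nat.leb_le; lia.
Qed.

Lemma clique_codes_bound : count (fun j => 2 <=? C j) (seq 0 k) <= 2 * clique_time.
Proof.
  eapply Nat.le_trans.
  { apply (count_mono _ (fun j => orb (m <=? P j) (m <=? P (S j)))).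
    intros x Hx Hc; apply in_seq in Hx; apply Nat.leb_le in Hc.
    apply clique_code_touches_clique; auto; lia. }
  eapply Nat.le_trans; [apply count_orb|]; unfold clique_time.
  pose proof (count_shift (fun j => m <=? P j) k).
  assert (count (fun j => m <=? P j) (seq 0 k) <= count (fun j => m <=? P j) (seq 0 (S k)))
    by (rewrite count_seq_S; lia).
  lia.
Qed.

(** The hidden ring edges cut the ring into [num_hidden] arcs; [arc x] is
    the arc of ring node [x], the first and last arcs being glued by the
    [mod]. Within an arc the agent only moves through revealed edges, so a
    new arc is entered only at the start or from the clique. *)
Definition hidden i := negb (T i).
Definition num_hidden := count hidden (seq 0 m).
Definition hidden_before x := count hidden (seq 0 x).
Definition arc x := hidden_before x mod num_hidden.
Definition entered_arcs :=
  arc 0 :: map (fun j => arc (P (S j))) (filter (fun j => andb (m <=? P j) (P (S j) <? m)) (seq 0 k)).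

Lemma arc_ring_succ x : x < m -> T x = true -> arc (ring_succ x) = arc x.
Proof.
  intros Hx Tx; unfold arc, ring_succ.
  assert (Hstep : hidden_before (x + 1) = hidden_before x).
  { unfold hidden_before; rewrite Nat.add_1_r, count_seq_S; unfold hidden at 2; rewrite Tx; simpl; lia. }
  destruct (x + 1 =? m) eqn:E; [apply Nat.eqb_eq in E|rewrite Hstep; auto].
  rewrite <- Hstep, E; unfold hidden_before at 1, num_hidden; simpl.
  rewrite Nat.Div0.mod_0_l, Nat.Div0.mod_same; auto.
Qed.

Lemma revealed_witness x j : j < k -> reveals_at phi adv x j = true -> T x = true.
Proof. intros Hj Hw; apply existsb_exists; exists j; split; auto; apply in_seq; lia. Qed.

Lemma arc_entered j : j <= k -> P j < m -> In (arc (P j)) entered_arcs.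
Proof.
  induction j as [|i IH]; intros Hj Hp; [left; auto|].
  destruct (Nat.lt_ge_cases (P i) m) as [Hi|Hi].
  - destruct (hpos_S i ltac:(lia)) as [E1 _].
    destruct (C i) as [|[|c]] eqn:Hc.
    + pose proof Hc as Hp0; unfold hcode in Hp0; apply port_code0 in Hp0; auto.
      rewrite Hp0, hnbr_ring_succ in E1 by auto; rewrite E1, arc_ring_succ; auto.
      * apply IH; auto; lia.
      * apply (revealed_witness _ i); [lia|]; unfold reveals_at; rewrite Hc, !Nat.eqb_refl; auto.
    + pose proof Hc as Hp1; unfold hcode in Hp1; apply port_code1 in Hp1; auto.
      rewrite Hp1, hnbr_ring_pred in E1 by auto.
      assert (Tp : T (ring_pred (P i)) = true).
      { apply (revealed_witness _ i); [lia|]; unfold reveals_at.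
        rewrite Hc, !Nat.eqb_refl; apply Bool.orb_true_r. }
      rewrite E1, <- (arc_ring_succ (ring_pred (P i))), ring_succ_pred; auto.
      * apply IH; auto; lia.
      * apply ring_pred_lt; auto.
    + pose proof (clique_code_touches_clique i ltac:(lia) ltac:(lia)) as Hcl.
      apply Bool.orb_true_iff in Hcl; destruct Hcl as [Hcl|Hcl]; apply Nat.leb_le in Hcl; lia.
  - right; apply in_map_iff; exists i; split; auto; apply filter_In; split; [apply in_seq; lia|].
    apply Bool.andb_true_iff; split; [apply Nat.leb_le|apply Nat.ltb_lt]; lia.
Qed.

Lemma hidden_before_onto y r : r <= hidden_before y -> exists x, x <= y /\ hidden_before x = r.
Proof.
  induction y as [|y IH]; intro H.
  - exists 0; unfold hidden_before, count in *; simpl in *; split; lia.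
  - assert (hidden_before (S y) <= hidden_before y + 1)
      by (unfold hidden_before; rewrite count_seq_S; destruct (hidden y); lia).
    destruct (Nat.le_gt_cases r (hidden_before y)) as [H1|H1].
    + destruct (IH H1) as [x [Hx Ex]]; exists x; split; auto.
    + exists (S y); split; auto; lia.
Qed.

Lemma num_hidden_bound : num_hidden <= 1 + clique_time.
Proof.
  assert (Hin : forall r, r < num_hidden -> In r entered_arcs).
  { intros r Hr.
    destruct (hidden_before_onto m r ltac:(unfold hidden_before, num_hidden in *; lia)) as [x [Hx Ex]].
    assert (x <> m) by (intro; subst; unfold hidden_before, num_hidden in *; lia).
    destruct (Hall x ltac:(unfold order; lia)) as [j [Hj Ej]].
    replace r with (arc (P j)) by (unfold arc; rewrite Ej, Ex; apply Nat.mod_small; auto).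
    apply arc_entered; auto; lia. }
  assert (num_hidden <= length entered_arcs).
  { rewrite <- (length_seq num_hidden 0) at 1; apply NoDup_incl_length; [apply seq_NoDup|].
    intros r Hr; apply in_seq in Hr; apply Hin; lia. }
  enough (length entered_arcs <= 1 + clique_time) by lia.
  unfold entered_arcs; simpl; rewrite length_map; apply le_n_S; unfold clique_time.
  eapply Nat.le_trans; [fold (count (fun j => andb (m <=? P j) (P (S j) <? m)) (seq 0 k))|].
  - apply (count_mono _ (fun j => m <=? P j)); intros x _ Hx; apply Bool.andb_true_iff in Hx; tauto.
  - rewrite count_seq_S; lia.
Qed.

End OneRun.

Definition encoding phi adv k := (adv, (code_trace phi adv k, hidden_labels phi adv k)).

(** Advice of at most [L] bits, at most [K] codes of which at most [2 R] come
    from clique moves, and at most [R + 1] hidden labels, where [R] bounds the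
    time spent in the clique. *)
Definition codebook L K :=
  let R := S K - m in
  list_prod (bit_lists L) (list_prod (code_lists_upto (2 * h) K (2 * R)) (bounded_lists h (S R))).

Lemma encoding_in_codebook phi adv k L K :
  In phi (labellings h m) -> hstate phi adv k <> None ->
  (forall x, x < order -> exists j, j <= k /\ hpos phi adv j = x) ->
  k <= K -> length adv <= L -> In (encoding phi adv k) (codebook L K).
Proof.
  intros Hphi Hrun Hall HkK Hadv; unfold encoding, codebook.
  pose proof (clique_time_bound phi adv k Hall).
  apply in_prod; [apply bit_lists_complete; auto|apply in_prod].
  - apply code_lists_upto_complete.
    + unfold code_trace; rewrite length_map, length_seq; auto.
    + apply Forall_forall; intros c Hc; unfold code_trace in Hc.
      apply in_map_iff in Hc; destruct Hc as [j [<- Hj]]; apply in_seq in Hj.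
      apply (hcode_lt phi adv k Hrun); lia.
    + unfold count_ge2, count, code_trace; rewrite filter_map_swap, length_map.
      pose proof (clique_codes_bound phi adv k Hrun); unfold count in *; lia.
  - apply bounded_lists_complete.
    + unfold hidden_labels; rewrite length_map.
      pose proof (num_hidden_bound phi adv k Hrun Hall); unfold num_hidden, count, hidden in *; lia.
    + apply Forall_forall; intros c Hc; unfold hidden_labels in Hc.
      apply in_map_iff in Hc; destruct Hc as [i [<- Hi]].
      apply filter_In in Hi; destruct Hi as [Hi _]; apply in_seq in Hi.
      apply labellingsP in Hphi; destruct Hphi as [Hl F].
      apply (proj1 (Forall_forall _ _) F), nth_In; lia.
Qed.

Lemma codebook_length_lt t L K : h = 2 ^ t -> m = h * h -> 10 <= t ->
  64 * K <= 65 * order -> 32 * L <= order * (2 * t + 1) -> length (codebook L K) < h ^ m.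
Proof.
  intros Eh Em Ht HK HL; unfold codebook; rewrite !length_prod.
  pose proof (bit_lists_length L).
  pose proof (code_lists_upto_length (2 * h) K (2 * (S K - m)) ltac:(lia)).
  pose proof (bounded_lists_length h (S (S K - m))).
  eapply Nat.le_lt_trans;
    [|apply (encoding_count_lt t h m order K L (S K - m)); auto; unfold order, clique_size; lia].
  rewrite Nat.mul_assoc; apply Nat.mul_le_mono; [apply Nat.mul_le_mono|]; lia.
Qed.

Lemma hard_labelling_exists t (adv : list nat -> advice) :
  h = 2 ^ t -> m = h * h -> 10 <= t ->
  (forall phi, In phi (labellings h m) -> 32 * length (adv phi) <= order * (2 * t + 1)) ->
  exists phi, In phi (labellings h m) /\
    forall k, explores_in A (adv phi) (hard_graph phi) 0 k -> 65 * order <= 64 * k.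
Proof.
  intros Eh Em Ht Hadv; apply NNPP; intro Hno.
  assert (Hfast : forall phi, In phi (labellings h m) ->
    exists k, explores_in A (adv phi) (hard_graph phi) 0 k /\ 64 * k < 65 * order).
  { intros phi Hphi; apply NNPP; intro Hk; apply Hno; exists phi; split; auto.
    intros k Ek; apply Nat.nlt_ge; intro Hlt; apply Hk; exists k; auto. }
  destruct (list_choice (list_eq_dec Nat.eq_dec) 0 _ _ Hfast) as [kf Hkf].
  set (L := order * (2 * t + 1) / 32); set (K := 65 * order / 64).
  pose proof (codebook_length_lt t L K Eh Em Ht (Nat.Div0.mul_div_le _ _) (Nat.Div0.mul_div_le _ _)).
  enough (h ^ m <= length (codebook L K)) by lia.
  rewrite <- labellings_length.
  apply (NoDup_inj_length_le (fun phi => encoding phi (adv phi) (kf phi))); [apply labellings_NoDup| |].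
  - intros x y Hx Hy E; injection E as Ea Ec Eu.
    assert (Ek : kf x = kf y)
      by (apply (f_equal (@length nat)) in Ec; unfold code_trace in Ec; rewrite !length_map, !length_seq in Ec; auto).
    rewrite <- Ea, <- Ek in Ec, Eu.
    destruct (Hkf x Hx) as [Ex _]; apply explores_in_visits_all in Ex.
    apply (encoding_injective x y (adv x) (kf x)); tauto.
  - intros x Hx; destruct (Hkf x Hx) as [Ex Hk]; apply explores_in_visits_all in Ex.
    apply encoding_in_codebook; try tauto.
    + apply Nat.div_le_lower_bound; lia.
    + apply Nat.div_le_lower_bound; [lia|]; apply Hadv; auto.
Qed.

End HardGraphs.

Lemma order_bounds t : let h := 2 ^ t in (1 <= t)%nat ->
  (4 ^ t <= order h (h * h) <= 2 ^ (2 * t + 1))%nat.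
Proof.
  intros h Ht; unfold order, clique_size.
  assert (2 <= h) by (replace 2 with (2 ^ 1) at 1 by reflexivity; apply Nat.pow_le_mono_r; lia).
  replace (4 ^ t) with (h * h) by (unfold h; rewrite <- Nat.pow_mul_l; reflexivity).
  replace (2 ^ (2 * t + 1)) with (2 * (h * h))
    by (unfold h; replace (2 * t + 1) with (t + t + 1) by lia; rewrite !Nat.pow_add_r; simpl; ring).
  nia.
Qed.

Open Scope R_scope.

Lemma ln_le_compat x y : 0 < x -> x <= y -> ln x <= ln y.
Proof.
  intros Hx Hy; destruct (Rle_lt_or_eq_dec _ _ Hy) as [H|<-]; [left; apply ln_increasing|right]; auto.
Qed.

Lemma exp_le_compat x y : x <= y -> exp x <= exp y.
Proof. intro Hy; destruct (Rle_lt_or_eq_dec _ _ Hy) as [H|<-]; [left; apply exp_increasing|right]; auto. Qed.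

Lemma log2_le (n s : nat) : (1 <= n)%nat -> (n <= 2 ^ s)%nat -> ln (INR n) / ln 2 <= INR s.
Proof.
  intros H1 H2; assert (Hln2 : 0 < ln 2) by (rewrite <- ln_1; apply ln_increasing; lra).
  apply Rmult_le_reg_r with (ln 2); auto; unfold Rdiv.
  rewrite Rmult_assoc, Rinv_l, Rmult_1_r by lra.
  rewrite <- ln_pow by lra; apply ln_le_compat; [apply lt_0_INR; lia|].
  replace 2 with (INR 2) by (simpl; lra); rewrite <- pow_INR; apply le_INR; auto.
Qed.

Lemma Rpower_le_div64 (eps : R) (t n : nat) : eps < 1 -> 3 <= INR t * (1 - eps) -> (4 ^ t <= n)%nat ->
  Rpower (INR n) eps <= INR n / 64.
Proof.
  intros He Ht Hn.
  assert (Hnpos : 0 < INR n) by (apply lt_0_INR; pose proof (Nat.pow_nonzero 4 t); lia).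
  assert (Hln4 : 0 < ln 4) by (rewrite <- ln_1; apply ln_increasing; lra).
  assert (Hl : INR t * ln 4 <= ln (INR n)).
  { rewrite <- ln_pow by lra; apply ln_le_compat; [apply pow_lt; lra|].
    replace 4 with (INR 4) by (simpl; lra); rewrite <- pow_INR; apply le_INR; auto. }
  assert (H64 : ln 64 = 3 * ln 4) by (replace 64 with (4 ^ 3) by lra; rewrite ln_pow by lra; simpl; lra).
  assert (Hk : ln 64 <= (1 - eps) * ln (INR n)).
  { rewrite H64; apply Rle_trans with ((INR t * (1 - eps)) * ln 4).
    - apply Rmult_le_compat_r; lra.
    - rewrite Rmult_assoc, (Rmult_comm (1 - eps)), <- Rmult_assoc.
      rewrite (Rmult_comm (1 - eps) (ln (INR n))); apply Rmult_le_compat_r; lra. }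
  unfold Rpower; apply Rle_trans with (exp (ln (INR n) + - ln 64)).
  - apply exp_le_compat; lra.
  - rewrite exp_plus, exp_Ropp, !exp_ln by lra; unfold Rdiv; lra.
Qed.

Lemma large_t_exists (eps : R) (B : nat) : eps < 1 -> exists t, (B <= t)%nat /\ 3 <= INR t * (1 - eps).
Proof.
  intro He; destruct (INR_unbounded (3 / (1 - eps))) as [t0 Ht0].
  exists (Nat.max B t0); split; [lia|].
  assert (INR t0 <= INR (Nat.max B t0)) by (apply le_INR; lia).
  apply Rle_trans with (3 / (1 - eps) * (1 - eps)); [right; field; lra|].
  apply Rmult_le_compat_r; lra.
Qed.

Theorem mainTheorem13 :
  forall (eps : R), eps < 1 ->
  forall f : oracle, advice_o_nlogn f ->
  forall A : algorithm,
  forall N : nat, exists n : nat, (N <= n)%nat /\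
    exists (G : pgraph n) (v : nat), (v < n)%nat /\ hamiltonian G /\
      forall k : nat, explores_in A (f n G v) G v k ->
        INR k >= INR n + Rpower (INR n) eps.
Proof.
  intros eps Heps f Hf A N.
  destruct (Hf (1 / 32) ltac:(lra)) as [N0 HN0].
  destruct (large_t_exists eps (N + N0 + 10) Heps) as [t [Ht Hteps]].
  destruct (order_bounds t ltac:(lia)) as [Hn1 Hn2].
  set (h := (2 ^ t)%nat) in *; set (m := (h * h)%nat) in *; set (n := order h m) in *.
  assert (Hh : (2 <= h)%nat) by (unfold h; replace 2%nat with (2 ^ 1)%nat at 1 by reflexivity; apply Nat.pow_le_mono_r; lia).
  assert (Hm : (4 <= m)%nat) by (unfold m; nia).
  assert (He : Nat.even m = true) by (unfold m, h; rewrite Nat.even_mul, Nat.even_pow by lia; reflexivity).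
  assert (HN : (N0 <= n)%nat) by (pose proof (Nat.pow_gt_lin_r 4 t); lia).
  set (adv := fun phi => f n (hard_graph h m Hh Hm He phi) 0%nat).
  destruct (hard_labelling_exists h m Hh Hm He A t adv eq_refl eq_refl ltac:(lia)) as [phi [_ Hphi]].
  - intros phi _; apply INR_le; rewrite !mult_INR.
    pose proof (HN0 n HN (hard_graph h m Hh Hm He phi) 0%nat ltac:(unfold n, order; lia)) as Hlen.
    pose proof (log2_le n (2 * t + 1)%nat ltac:(unfold n, order; lia) Hn2).
    pose proof (pos_INR n); unfold adv; replace (INR 32) with 32 by (simpl; lra).
    apply Rle_trans with (INR n * (ln (INR n) / ln 2)); [lra|apply Rmult_le_compat_l; auto].
  - exists n; split; [pose proof (Nat.pow_gt_lin_r 4 t); lia|].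
    exists (hard_graph h m Hh Hm He phi), 0%nat; split; [unfold n, order; lia|].
    split; [apply hard_graph_hamiltonian|].
    intros k Hk; apply Hphi, le_INR in Hk; rewrite !mult_INR in Hk; fold n in Hk.
    replace (INR 65) with 65 in Hk by (simpl; lra); replace (INR 64) with 64 in Hk by (simpl; lra).
    pose proof (Rpower_le_div64 eps t n Heps Hteps Hn1); lra.
Qed.
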